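(* Let $w=w_1\cdots w_n$ be a word of distinct positive integers avoiding the patterns $3124$ and $3214$. Let $x$ be the position of the maximum letter of $w$, and let $i_1<i_2<\dots<i_k$ ($k\ge0$) be all indices $i<x$ with $w_i>w_{i+1}$ (so that $w_1\cdots w_x$ is the concatenation of the ascending runs $w_1\cdots w_{i_1}$, $w_{i_1+1}\cdots w_{i_2}$, $\dots$, $w_{i_k+1}\cdots w_x$). Then: (1) $\mathrm{Lrmax}(w)=\{w_j: 1\le j\le x,\ j\notin\{i_1+1,i_2+1,\dots,i_k+1\}\}$; in particular $w_{i_1}<w_{i_2}<\dots<w_{i_k}<w_x$. (2) There are indices $x\le c_k\le c_{k-1}\le\dots\le c_1\le c_0=n$ such that every letter of the (possibly empty) factor $b=w_{x+1}\cdots w_{c_k}$ is larger than $w_{i_k}$ (if $k\ge 1$), and for each $1\le j\le k$ every letter of the (possibly empty) factor $b_j=w_{c_j+1}\cdots w_{c_{j-1}}$ is smaller than $w_{i_j}$ and, if $j\ge2$, larger than $w_{i_{j-1}}$. Thus $w_{x+1}\cdots w_n=b\,b_k\,b_{k-1}\cdots b_1$.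
   Context: A word $w$ of distinct positive integers contains a pattern $P=p_1\cdots p_m$ (a permutation of $[m]$) if some subsequence $w_{i_1}\cdots w_{i_m}$ with $i_1<\dots<i_m$ is order-isomorphic to $P$; otherwise it avoids $P$. $\mathrm{Lrmax}(w)$ is the set of letters $w_i$ with $w_i>w_j$ for all $j<i$. *)

From mathcomp Require Import all_boot.
Set Implicit Arguments. Unset Strict Implicit. Unset Printing Implicit Defensive.

(* Words are [seq nat]; positions are 1-indexed as in the paper:
   [letter w j] is w_j for 1 <= j <= size w. *)
Definition letter (w : seq nat) (j : nat) : nat := nth 0 w j.-1.

Definition contains (w P : seq nat) : Prop :=
  exists2 s : seq nat, subseq s w &
    size s = size P /\
    forall i j, i < size P -> j < size P ->
      (nth 0 s i < nth 0 s j) = (nth 0 P i < nth 0 P j).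

Definition avoids (w P : seq nat) : Prop := ~ contains w P.

Definition Lrmax (w : seq nat) (a : nat) : Prop :=
  exists i, [/\ 1 <= i <= size w, letter w i = a &
                forall j, 1 <= j < i -> letter w j < a].

Definition descents_before (w : seq nat) (x : nat) : seq nat :=
  [seq i <- iota 1 x.-1 | letter w (i.+1) < letter w i].

From mathcomp Require Import all_boot.
From mathcomp Require Import zify.

(* Part (1): a position j <= x that does not follow a descent is a
   left-to-right-maximum position, since a larger earlier letter w_m would
   give an occurrence w_m w_{j-1} w_j w_x of 3124; conversely the letter
   following a descent is not a left-to-right maximum.  Descents are never
   consecutive (w_e w_{e+1} w_{e+2} w_x would be a 3214), so every descent
   is itself a left-to-right-maximum position, whence the letters
   w_{i_1} < ... < w_{i_k} < w_x increase.
   Part (2): for a descent d and positions x < p < q, we never have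
   w_p < w_d < w_q (w_d w_{d+1} w_p w_q would be a 3124 or a 3214).  Hence
   after x all letters larger than w_d precede all letters smaller than w_d,
   and the cut point c_j is the last position after x whose letter exceeds
   w_{i_j}; it is antitone in that threshold. *)

Definition is_lrmax_pos (w : seq nat) (j : nat) : Prop :=
  forall m, 1 <= m < j -> letter w m < letter w j.

Lemma letter_inj {w : seq nat} {p q : nat} :
  uniq w -> 1 <= p <= size w -> 1 <= q <= size w ->
  letter w p = letter w q -> p = q.
Proof.
move=> w_uniq hp hq; have hp' : p.-1 < size w by lia.
have hq' : q.-1 < size w by lia.
by rewrite /letter => /eqP; rewrite nth_uniq // => /eqP; lia.
Qed.

Lemma letter_lt {w : seq nat} {p q : nat} :
  uniq w -> 1 <= p <= size w -> 1 <= q <= size w -> p != q ->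
  letter w p <= letter w q -> letter w p < letter w q.
Proof.
move=> w_uniq hp hq /eqP p_neq_q le_pq; rewrite ltn_neqAle le_pq andbT.
by apply/eqP => /(letter_inj w_uniq hp hq).
Qed.

Lemma subseq_drop_nth (w s : seq nat) (i j : nat) :
  i <= j < size w -> subseq s (drop j.+1 w) -> subseq (nth 0 w j :: s) (drop i w).
Proof.
move=> hij sub; have le_ij : i <= j by lia.
apply: (@subseq_trans _ (drop j w)).
  by rewrite (drop_nth 0 (_ : j < size w)) /= ?eqxx //; lia.
by rewrite -(subnK le_ij) -drop_drop drop_subseq.
Qed.

Lemma contains_at {w P : seq nat} {a b c d : nat} :
  1 <= a -> a < b -> b < c -> c < d -> d <= size w -> size P = 4 ->
  (forall i j, i < 4 -> j < 4 ->
    (nth 0 [:: letter w a; letter w b; letter w c; letter w d] i <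
     nth 0 [:: letter w a; letter w b; letter w c; letter w d] j)
    = (nth 0 P i < nth 0 P j)) -> contains w P.
Proof.
move=> ha hab hbc hcd hd sizeP same_order.
exists [:: letter w a; letter w b; letter w c; letter w d]; last by rewrite sizeP.
rewrite -[w in subseq _ w]drop0 /letter.
apply: subseq_drop_nth; first lia.
apply: subseq_drop_nth; first lia.
apply: subseq_drop_nth; first lia.
apply: subseq_drop_nth; [lia | exact: sub0seq].
Qed.

Lemma contains3124 {w : seq nat} {a b c d : nat} :
  1 <= a -> a < b -> b < c -> c < d -> d <= size w ->
  letter w b < letter w c < letter w a -> letter w a < letter w d ->
  contains w [:: 3; 1; 2; 4].
Proof.
move=> ha hab hbc hcd hd h1 h2; apply: (contains_at ha hab hbc hcd hd) => //.
by move=> [|[|[|[|i]]]] [|[|[|[|j]]]] //= _ _; apply/idP/idP; lia.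
Qed.

Lemma contains3214 {w : seq nat} {a b c d : nat} :
  1 <= a -> a < b -> b < c -> c < d -> d <= size w ->
  letter w c < letter w b < letter w a -> letter w a < letter w d ->
  contains w [:: 3; 2; 1; 4].
Proof.
move=> ha hab hbc hcd hd h1 h2; apply: (contains_at ha hab hbc hcd hd) => //.
by move=> [|[|[|[|i]]]] [|[|[|[|j]]]] //= _ _; apply/idP/idP; lia.
Qed.

Lemma mem_descents_before (w : seq nat) (x i : nat) :
  (i \in descents_before w x) = (1 <= i < x) && (letter w i.+1 < letter w i).
Proof.
rewrite /descents_before mem_filter mem_iota andbC; congr andb.
by apply/idP/idP; lia.
Qed.

Lemma sorted_lrmax_letters (w s : seq nat) :
  sorted ltn s -> (forall j, j \in s -> 1 <= j /\ is_lrmax_pos w j) ->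
  sorted ltn (map (letter w) s).
Proof.
move=> s_sorted s_lrmax; rewrite sorted_map.
apply: (@sub_in_sorted _ [pred j | j \in s] ltn) s_sorted; last exact/allP.
move=> i j /s_lrmax[i_pos _] /s_lrmax[_ j_lrmax] lt_ij /=.
by apply: j_lrmax; rewrite i_pos.
Qed.

Lemma descent_separates {w : seq nat} {d p q : nat} :
  uniq w -> avoids w [:: 3; 1; 2; 4] -> avoids w [:: 3; 2; 1; 4] ->
  1 <= d -> letter w d.+1 < letter w d -> d.+1 < p -> p < q -> q <= size w ->
  letter w p <= letter w d -> letter w d < letter w q -> False.
Proof.
move=> w_uniq avoid3124 avoid3214 hd desc hdp hpq hq le_pd lt_dq.
have lt_pd : letter w p < letter w d by apply: letter_lt; lia.
case: (ltngtP (letter w d.+1) (letter w p)) => [lt | gt | eq].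
- by apply: avoid3124; apply: (contains3124 (a := d) (b := d.+1) (c := p) (d := q)); lia.
- by apply: avoid3214; apply: (contains3214 (a := d) (b := d.+1) (c := p) (d := q)); lia.
- by have := letter_inj w_uniq _ _ eq; lia.
Qed.

(* The last position after x carrying a letter larger than a (or x if there
   is none): the candidate end of the block of letters above a. *)
Definition cut (w : seq nat) (x a : nat) : nat :=
  maxn x (\max_(x.+1 <= p < (size w).+1 | a < letter w p) p).

Lemma cut_bounds (w : seq nat) (x a : nat) :
  x <= size w -> x <= cut w x a <= size w.
Proof.
move=> hx; rewrite leq_maxl /= geq_max hx /=.
by apply/bigmax_leqP_seq => p; rewrite mem_index_iota; lia.
Qed.

Lemma cut_antitone (w : seq nat) (x a b : nat) :
  a <= b -> cut w x b <= cut w x a.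
Proof.
move=> le_ab; rewrite /cut geq_max leq_maxl /=.
apply/bigmax_leqP_seq => p hp lt_bp.
rewrite leq_max; apply/orP; right.
by apply: (leq_bigmax_seq (F := fun q => q) p) hp _; apply: leq_ltn_trans lt_bp.
Qed.

Lemma above_cut {w : seq nat} {x a p : nat} :
  cut w x a < p <= size w -> letter w p <= a.
Proof.
move=> hp; rewrite leqNgt; apply/negP => lt_ap.
have : p <= \max_(x.+1 <= q < (size w).+1 | a < letter w q) q.
  apply: (leq_bigmax_seq (F := fun q => q) p) => //.
  by rewrite mem_index_iota; move: hp; rewrite /cut; lia.
by move: hp; rewrite /cut; lia.
Qed.

Lemma below_cut {w : seq nat} {x a p : nat} :
  (forall p q, x < p -> p < q -> q <= size w ->
     letter w p <= a -> a < letter w q -> False) ->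
  x < p <= cut w x a -> a < letter w p.
Proof.
move=> separated hp; rewrite ltnNge; apply/negP => le_pa.
have : \max_(x.+1 <= q < (size w).+1 | a < letter w q) q <= p.-1.
  apply/bigmax_leqP_seq => q; rewrite mem_index_iota => hq lt_aq.
  case: (ltngtP q p) => [lt_qp | lt_pq | eq_qp]; first lia.
  - by case: (separated p q); lia.
  - by move: lt_aq; rewrite eq_qp ltnNge le_pa.
by move: hp; rewrite /cut; lia.
Qed.

Section MaximumPosition.

Variables (w : seq nat) (x : nat).
Hypothesis w_uniq : uniq w.
Hypothesis avoid3124 : avoids w [:: 3; 1; 2; 4].
Hypothesis avoid3214 : avoids w [:: 3; 2; 1; 4].
Hypothesis x_pos : 1 <= x <= size w.
Hypothesis x_max : forall j, 1 <= j <= size w -> letter w j <= letter w x.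

Local Notation D := (descents_before w x).

Lemma lrmax_pos_max : is_lrmax_pos w x.
Proof. by move=> m hm; apply: letter_lt => //; try lia; apply: x_max; lia. Qed.

(* Part (1), main half: a position up to x that does not follow a descent
   is a left-to-right maximum, otherwise 3124 occurs. *)
Lemma lrmax_pos_ascent (j : nat) :
  1 <= j <= x -> j \notin map S D -> is_lrmax_pos w j.
Proof.
move=> hj not_after_descent.
have ascent_into_j : 1 < j -> letter w j.-1 < letter w j.
  move=> j_gt1; have : j.-1 \notin D.
    by apply: contra not_after_descent => hd; apply/mapP; exists j.-1 => //; lia.
  rewrite mem_descents_before negb_and prednK; last lia.
  case/orP=> [|/negbTE nlt]; first lia.
  by apply: letter_lt => //; try lia; rewrite leqNgt nlt.
have [-> | lt_jx] : j = x \/ j < x by lia.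
  exact: lrmax_pos_max.
move=> m hm; rewrite ltnNge; apply/negP => le_jm.
have lt_jm : letter w j < letter w m by apply: letter_lt; lia.
have [eq_m | lt_m] : m = j.-1 \/ m < j.-1 by lia.
  by have := ascent_into_j ltac:(lia); rewrite -eq_m; lia.
apply: avoid3124; apply: (contains3124 (a := m) (b := j.-1) (c := j) (d := x)); try lia.
have := ascent_into_j ltac:(lia); have := lrmax_pos_max m ltac:(lia); lia.
Qed.

(* Two descents are never adjacent, otherwise 3214 occurs. *)
Lemma descents_isolated (d : nat) : d \in D -> d \notin map S D.
Proof.
move=> hd; apply/mapP => [[e he def_d]]; subst d.
move: hd he; rewrite !mem_descents_before => hd he.
have lt_ex : letter w e < letter w x.
  by apply: lrmax_pos_max; lia.
apply: avoid3214; apply: (contains3214 (a := e) (b := e.+1) (c := e.+2) (d := x)); try lia.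
have [eq_x | lt_x] : e.+2 = x \/ e.+2 < x by lia.
  by have := x_max e.+1 ltac:(lia); rewrite -eq_x; lia.
lia.
Qed.

Lemma lrmax_pos_descent (d : nat) : d \in D -> is_lrmax_pos w d.
Proof.
move=> hd; apply: lrmax_pos_ascent; last exact: descents_isolated.
by move: hd; rewrite mem_descents_before; lia.
Qed.

Lemma Lrmax_positions (a : nat) :
  Lrmax w a <-> exists j, [/\ 1 <= j <= x, j \notin map S D & letter w j = a].
Proof.
split.
- case=> i [hi <- i_lrmax]; exists i; split => //.
  + case: (ltnP x i) => [gt_ix | le_ix]; last lia.
    by have := i_lrmax x ltac:(lia); have := x_max i hi; lia.
  + apply/negP => /mapP [e he def_i]; move: he; rewrite mem_descents_before => he.
    by have := i_lrmax e ltac:(lia); rewrite def_i; lia.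
- case=> j [hj not_after_descent <-]; exists j; split => //; first lia.
  exact: lrmax_pos_ascent.
Qed.

Lemma sorted_descent_letters : sorted ltn (map (letter w) (rcons D x)).
Proof.
apply: sorted_lrmax_letters.
- rewrite sorted_pairwise; last exact: ltn_trans.
  rewrite pairwise_rcons -sorted_pairwise; last exact: ltn_trans.
  apply/andP; split; first by apply/allP => d; rewrite mem_descents_before; lia.
  by rewrite /descents_before sorted_filter ?iota_ltn_sorted //; exact: ltn_trans.
- move=> j; rewrite mem_rcons inE => /orP[/eqP -> | hj].
    by split; [lia | exact: lrmax_pos_max].
  split; last exact: lrmax_pos_descent.
  by move: hj; rewrite mem_descents_before; lia.
Qed.

Lemma descent_letters_increase (j : nat) :
  j.+1 < size D -> letter w (nth 0 D j) < letter w (nth 0 D j.+1).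
Proof.
move=> hj; have := sorted_ltn_nth ltn_trans 0 sorted_descent_letters.
move=> /(_ j j.+1); rewrite !inE size_map size_rcons !(nth_map 0) ?size_rcons; try lia.
by rewrite !nth_rcons !ifT //; lia.
Qed.

Lemma above_descent_cut (d p : nat) : d \in D ->
  x < p <= cut w x (letter w d) -> letter w d < letter w p.
Proof.
rewrite mem_descents_before => /andP[hd desc].
apply: below_cut => p' q hp' hpq hq.
by apply: descent_separates => //; lia.
Qed.

Lemma below_descent_cut (d p : nat) : d \in D ->
  cut w x (letter w d) < p <= size w -> letter w p < letter w d.
Proof.
rewrite mem_descents_before => hd hp.
have hc := @cut_bounds w x (letter w d) ltac:(lia).
by apply: (letter_lt w_uniq _ _ _ (above_cut hp)); lia.
Qed.

End MaximumPosition.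

Theorem proposition2p2 (w : seq nat) (x : nat) :
  uniq w -> all (fun a => 0 < a) w ->
  avoids w [:: 3; 1; 2; 4] -> avoids w [:: 3; 2; 1; 4] ->
  1 <= x <= size w ->
  (forall j, 1 <= j <= size w -> letter w j <= letter w x) ->
  let D := descents_before w x in
  let k := size D in
  let i_ := fun j => nth 0 D j.-1 in
  (* (1) *)
  ((forall a, Lrmax w a <->
      exists j, [/\ 1 <= j <= x, j \notin map S D & letter w j = a])
   /\ sorted ltn (map (letter w) (rcons D x)))
  /\
  (* (2) *)
  (exists c : nat -> nat,
     [/\ c 0 = size w, x <= c k,
         forall j, 1 <= j <= k -> c j <= c j.-1,
         forall p, x < p <= c k -> 1 <= k -> letter w (i_ k) < letter w p
       & forall j, 1 <= j <= k -> forall p, c j < p <= c j.-1 ->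
           letter w p < letter w (i_ j) /\
           (2 <= j -> letter w (i_ j.-1) < letter w p)]).
Proof.
move=> w_uniq _ avoid3124 avoid3214 x_pos x_max D k i_; rewrite {}/i_ {}/k.
split; first split.
- exact: Lrmax_positions.
- exact: sorted_descent_letters.
(* c_j is the cut of w after x at the threshold w_{i_j}. *)
pose c j := if j is j'.+1 then cut w x (letter w (nth 0 D j')) else size w.
have c_bounds j : x <= c j <= size w.
  by case: j => [|j] /=; [lia | apply: cut_bounds; lia].
have D_mem j : j < size D -> nth 0 D j \in D by apply: mem_nth.
exists c; split => //.
- by case/andP: (c_bounds (size D)).
- move=> [|[|j]] // hj; first by case/andP: (c_bounds 1).
  by apply: cut_antitone; apply/ltnW/descent_letters_increase.
- move=> p hp k_pos; apply: (above_descent_cut w x) => //.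
    by apply: D_mem; lia.
  by rewrite -[cut _ _ _]/(c (size D).-1.+1) prednK.
- move=> [|j] // hj p hp; split; last first.
    case: j hj hp => [|j] // hj hp _.
    apply: (above_descent_cut w x) => //; first by apply: D_mem; lia.
    by have := c_bounds j.+2; move: hp => /=; lia.
  apply: (below_descent_cut w x) => //; first by apply: D_mem; lia.
  by have := c_bounds j; move: hp => /=; lia.
Qed.
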